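(* Let $\mathbf{f}$ be the Fibonacci sequence, fixed point of the substitution $0\mapsto01$, $1\mapsto0$. For each $k\ge2$, the smallest integer $C_k\ge1$ such that $\mathbf{f}$ is $(k,C_k)$-balanced is $C_k=2$.
   Context: For positive integers $k,C$, a sequence $\mathbf{x}$ over alphabet $A$ is $(k,C)$-balanced if for all factors $u,v$ of $\mathbf{x}$ with $|u|=|v|$ and every $w\in A^k$, $||u|_w-|v|_w|\le C$, where $|u|_w$ is the number of (possibly overlapping) occurrences of $w$ in $u$. *)

From mathcomp Require Import all_boot all_order all_algebra.
Set Implicit Arguments. Unset Strict Implicit. Unset Printing Implicit Defensive.

Definition fib_subst (a : nat) : seq nat := if a == 0 then [:: 0; 1] else [:: 0].
Definition fib_morph (s : seq nat) : seq nat := flatten (map fib_subst s).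

(* sigma^m(0); these are successive prefixes of the fixed point, and
   sigma^(n+1)(0) has length >= n+1, so the n-th letter of the fixed point
   is the n-th letter of sigma^(n+1)(0). *)
Definition fib_iter (m : nat) : seq nat := iter m fib_morph [:: 0].
Definition fib_word (n : nat) : nat := nth 0 (fib_iter n.+1) n.

Definition factor (x : nat -> nat) (i n : nat) : seq nat := mkseq (fun j => x (i + j)) n.

Definition occ (w u : seq nat) : nat :=
  count (fun p => take (size w) (drop p u) == w) (iota 0 (size u).+1).

Definition balanced (x : nat -> nat) (k C : nat) : Prop :=
  forall (i j n : nat) (w : seq nat), size w = k -> all (fun a => a < 2) w ->
    (`|occ w (factor x i n) - occ w (factor x j n)| <= C)%N.

(* Write sigma for the substitution. As f = sigma^m(f), f is the concatenation
   of the blocks sigma^m(f j), the j-th one starting at block_start m j =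
   |sigma^m(f[0, j))|. The words sigma^m(01) and sigma^m(10) share their prefix
   of length common_len m = |sigma^m(01)| - 2 and end in 01 and 10; extending a
   factor w of f letter by letter, this shows that the occurrences of w are
   exactly the positions p0 + block_start m j, j >= 0, for suitable m and p0.
   Consecutive occurrences are thus |sigma^m(0)| or |sigma^m(1)| apart as the
   letters of f dictate, so comparing the numbers of occurrences in two windows
   of the same length reduces to comparing the numbers of zeros in two factors
   of f of the same length. These differ by at most 1 (the same argument for
   the word 0, by strong induction on the length), which bounds the difference
   of occurrence counts by 2. Conversely the factor f[2, 2 + k) has m >= 3,
   and the gaps between its first occurrences give windows with 3 and with 1
   occurrence. *)

From mathcomp Require Import all_boot all_order all_algebra.
From mathcomp Require Import zify.

Local Notation f := fib_word.

(** * Iterates of the substitution *)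

Definition fib_morphn (m : nat) (v : seq nat) : seq nat := iter m fib_morph v.

Lemma fib_morph_cat u v : fib_morph (u ++ v) = fib_morph u ++ fib_morph v.
Proof. by rewrite /fib_morph map_cat flatten_cat. Qed.

Lemma fib_morphnS m v : fib_morphn m.+1 v = fib_morph (fib_morphn m v).
Proof. by []. Qed.

Lemma fib_morphnSr m v : fib_morphn m.+1 v = fib_morphn m (fib_morph v).
Proof. exact: iterSr. Qed.

Lemma fib_morphnD m n v : fib_morphn m (fib_morphn n v) = fib_morphn (m + n) v.
Proof. by rewrite /fib_morphn iterD. Qed.

Lemma fib_morphn_cat m u v :
  fib_morphn m (u ++ v) = fib_morphn m u ++ fib_morphn m v.
Proof. by elim: m => //= m IH; rewrite -!/(fib_morphn _ _) IH fib_morph_cat. Qed.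

Lemma fib_morphn_nil m : fib_morphn m [::] = [::].
Proof. by elim: m => //= m IH; rewrite -/(fib_morphn _ _) IH. Qed.

Lemma fib_morph_lt2 v : all (fun a => a < 2) (fib_morph v).
Proof.
elim: v => //= a v IH.
by rewrite -cat1s fib_morph_cat all_cat IH andbT /fib_morph /= /fib_subst; case: (a == 0).
Qed.

Definition len0 (m : nat) : nat := size (fib_morphn m [:: 0]).
Definition len1 (m : nat) : nat := size (fib_morphn m [:: 1]).

Lemma len0S m : len0 m.+1 = len0 m + len1 m.
Proof.
by rewrite /len0 fib_morphnSr (_ : fib_morph _ = [:: 0] ++ [:: 1]) // fib_morphn_cat size_cat.
Qed.

Lemma len1S m : len1 m.+1 = len0 m.
Proof. by rewrite /len1 fib_morphnSr. Qed.

Lemma len1_le_len0 m : len1 m <= len0 m.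
Proof. by case: m => // m; rewrite len0S len1S leq_addr. Qed.

Lemma len1_gt0 m : 0 < len1 m.
Proof. by elim: m => // m IH; rewrite len1S (leq_trans IH (len1_le_len0 m)). Qed.

Lemma len0_le_double_len1 m : len0 m <= 2 * len1 m.
Proof. by case: m => // m; rewrite len0S len1S; have := len1_le_len0 m; lia. Qed.

Lemma size_fib_morphn1 m a :
  size (fib_morphn m [:: a]) = if a == 0 then len0 m else len1 m.
Proof.
case: eqP => [-> //|/eqP a_neq0]; case: m => [//|m].
by rewrite /len1 !fib_morphnSr /fib_morph /= /fib_subst (negbTE a_neq0).
Qed.

Lemma size_fib_morphn m v : size (fib_morphn m v) =
  size v * len1 m + count (pred1 0) v * (len0 m - len1 m).
Proof.
elim: v => [|a v IH]; first by rewrite fib_morphn_nil.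
rewrite -cat1s fib_morphn_cat size_cat IH size_fib_morphn1 /=.
by have := len1_le_len0 m; case: eqP => _ /=; nia.
Qed.

Lemma fib_iterS N : fib_iter N.+1 = fib_iter N ++ fib_morphn N [:: 1].
Proof. by rewrite [LHS]fib_morphnSr -fib_morphn_cat. Qed.

Lemma fib_iter_catr N d : exists r, fib_iter (N + d) = fib_iter N ++ r.
Proof.
elim: d => [|d [r IH]]; first by exists [::]; rewrite addn0 cats0.
by exists (r ++ fib_morphn (N + d) [:: 1]); rewrite addnS fib_iterS IH catA.
Qed.

Lemma size_fib_iter N : N < size (fib_iter N).
Proof.
by elim: N => // N IH; rewrite fib_iterS size_cat; have := len1_gt0 N; rewrite /len1; lia.
Qed.

Lemma nth_fib_iter N n : n < size (fib_iter N) -> nth 0 (fib_iter N) n = f n.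
Proof.
move=> lt_n_N; rewrite /fib_word.
have [le_N_n1|lt_n1_N] := leqP N n.+1.
  have [r] := fib_iter_catr N (n.+1 - N).
  by rewrite subnKC // => ->; rewrite nth_cat lt_n_N.
have [r E] := fib_iter_catr n.+1 (N - n.+1).
by rewrite subnKC ?(ltnW lt_n1_N) // in E; rewrite E nth_cat (ltnW (size_fib_iter _)).
Qed.

Lemma fib_word_lt2 n : f n < 2.
Proof.
have /all_nthP lt2 : all (fun a => a < 2) (fib_iter n.+1) by apply: fib_morph_lt2.
by rewrite /fib_word; case: (ltnP n (size (fib_iter n.+1))) => [/lt2 //|?]; rewrite nth_default.
Qed.

Lemma fib_word_0or1 n : f n = 0 \/ f n = 1.
Proof. by have := fib_word_lt2 n; case: (f n) => [|[|]]; auto. Qed.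

Lemma fib_iter_prefix N s r : fib_iter N = s ++ r -> s = mkseq f (size s).
Proof.
move=> E; apply: (@eq_from_nth _ 0); rewrite ?size_mkseq // => i lt_i_s.
by rewrite nth_mkseq // -(@nth_fib_iter N) E ?nth_cat ?lt_i_s // size_cat ltn_addr.
Qed.

Lemma mkseq_factor (x : nat -> nat) j r : mkseq x (j + r) = mkseq x j ++ factor x j r.
Proof.
rewrite /mkseq /factor iotaD map_cat; congr (_ ++ _).
by rewrite add0n -{1}(addn0 j) iotaDl -map_comp.
Qed.

Definition block_start (m j : nat) : nat := size (fib_morphn m (mkseq f j)).

Lemma fib_morphn_prefix m j : fib_morphn m (mkseq f j) = mkseq f (block_start m j).
Proof.
have le_j : j <= size (fib_iter j) by exact: ltnW (size_fib_iter j).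
have prefix_j : mkseq f j = take j (fib_iter j).
  have := @fib_iter_prefix j (take j (fib_iter j)) (drop j (fib_iter j)).
  by rewrite cat_take_drop size_take_min (minn_idPl le_j) => ->.
apply: (@fib_iter_prefix (m + j) _ (fib_morphn m (drop j (fib_iter j)))).
by rewrite prefix_j -fib_morphn_cat cat_take_drop /fib_iter /fib_morphn iterD.
Qed.

Lemma block_startD_size m j r :
  block_start m (j + r) = block_start m j + size (fib_morphn m (factor f j r)).
Proof. by rewrite /block_start mkseq_factor fib_morphn_cat size_cat. Qed.

Lemma fib_word_block_start m j r t : t < size (fib_morphn m (factor f j r)) ->
  f (block_start m j + t) = nth 0 (fib_morphn m (factor f j r)) t.
Proof.
move=> lt_t; rewrite -(@nth_mkseq _ 0 f (block_start m (j + r))); last first.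
  by rewrite block_startD_size ltn_add2l.
by rewrite -fib_morphn_prefix mkseq_factor fib_morphn_cat nth_cat ltnNge leq_addr /= addKn.
Qed.

Lemma fib_word_block_start1 m j t : t < size (fib_morphn m [:: f j]) ->
  f (block_start m j + t) = nth 0 (fib_morphn m [:: f j]) t.
Proof. by have := @fib_word_block_start m j 1 t; rewrite /factor /mkseq /= addn0. Qed.

Lemma block_start0 m : block_start m 0 = 0.
Proof. by rewrite /block_start fib_morphn_nil. Qed.

Lemma block_startS m j : block_start m j.+1 = block_start m j + size (fib_morphn m [:: f j]).
Proof. by rewrite -addn1 block_startD_size /factor /mkseq /= addn0. Qed.

Lemma len1_le_size_fib_morphn1 m a : len1 m <= size (fib_morphn m [:: a]).
Proof. by rewrite size_fib_morphn1; case: eqP => // _; apply: len1_le_len0. Qed.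

Lemma block_start_lt m j : block_start m j < block_start m j.+1.
Proof.
by rewrite block_startS -addn1 leq_add2l (leq_trans (len1_gt0 m)) ?len1_le_size_fib_morphn1.
Qed.

Lemma block_start_comp m m' i : block_start m (block_start m' i) = block_start (m + m') i.
Proof. by rewrite {1}/block_start -fib_morphn_prefix fib_morphnD. Qed.

Definition zeros (i L : nat) : nat := count (pred1 0) (factor f i L).

Lemma block_startD m j t :
  block_start m (j + t) = block_start m j + t * len1 m + zeros j t * (len0 m - len1 m).
Proof. by rewrite block_startD_size size_fib_morphn size_mkseq addnA. Qed.

Lemma block_start_decomp m n :
  exists j t, n = block_start m j + t /\ t < size (fib_morphn m [:: f j]).
Proof.
have size_gt0 j : 0 < size (fib_morphn m [:: f j]).
  exact: leq_trans (len1_gt0 m) (len1_le_size_fib_morphn1 m _).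
elim: n => [|n [j [t [-> lt_t]]]]; first by exists 0, 0; rewrite block_start0.
have [lt_t1|le_size] := ltnP t.+1 (size (fib_morphn m [:: f j])).
  by exists j, t.+1; rewrite addnS.
by exists j.+1, 0; rewrite block_startS addn0; split; [lia | exact: size_gt0].
Qed.

Lemma fib_word_eq0 n : f n = 0 <-> exists i, n = block_start 1 i.
Proof.
split=> [f_n0|[i ->]]; last first.
  rewrite -[block_start 1 i]addn0 fib_word_block_start1 ?size_fib_morphn1.
    by case: (fib_word_0or1 i) => ->.
  by case: eqP.
have [i [t [E lt_t]]] := block_start_decomp 1 n; exists i.
case: t E lt_t => [|t] E lt_t; first by rewrite E addn0.
move: f_n0; rewrite E fib_word_block_start1 //.
by case: (fib_word_0or1 i) lt_t => ->; case: t {E}.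
Qed.

Lemma fib_word_neq0 n : f n <> 0 <-> exists i, f i = 0 /\ n = (block_start 1 i).+1.
Proof.
split=> [f_n_neq0|[i [f_i0 ->]]]; last by rewrite -addn1 fib_word_block_start1 f_i0.
have [i [t [E lt_t]]] := block_start_decomp 1 n; exists i.
move: f_n_neq0; rewrite E fib_word_block_start1 //.
by case: (fib_word_0or1 i) lt_t => -> /=; case: t {E} => [|[|]] //; rewrite addn1.
Qed.

Lemma fib_word_block_start2 i : f (block_start 2 i) = 0 /\ f (block_start 2 i).+1 = 1.
Proof.
split; [rewrite -[block_start 2 i]addn0 | rewrite -addn1];
  by rewrite fib_word_block_start1 ?size_fib_morphn1; case: (fib_word_0or1 i) => ->.
Qed.

Lemma fib_word_neq0_block_start2 n : f n <> 0 <-> exists i, n = (block_start 2 i).+1.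
Proof.
split=> [/fib_word_neq0 [_ [/fib_word_eq0 [i ->] ->]]|[i ->]].
  by exists i; rewrite block_start_comp.
by case: (fib_word_block_start2 i) => _ ->.
Qed.

Lemma fib_word_no11 n : f n <> 0 -> f n.+1 = 0.
Proof.
move=> /fib_word_neq0 [i [f_i0 ->]]; apply/fib_word_eq0; exists i.+1.
by rewrite block_startS f_i0 size_fib_morphn1 addn2.
Qed.

Definition common_len (m : nat) : nat := len0 m + len1 m - 2.

Definition fib_block2 (m a : nat) : seq nat :=
  fib_morphn m (if a == 0 then [:: 0; 1] else [:: 1; 0]).

Lemma fib_morphn_01_10 m : exists z,
  (fib_morphn m [:: 0; 1] = z ++ [:: 0; 1] /\ fib_morphn m [:: 1; 0] = z ++ [:: 1; 0]) \/
  (fib_morphn m [:: 0; 1] = z ++ [:: 1; 0] /\ fib_morphn m [:: 1; 0] = z ++ [:: 0; 1]).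
Proof.
elim: m => [|m [z [[E01 E10]|[E01 E10]]]]; first by exists [::]; left.
  by exists (fib_morph z ++ [:: 0]); right; rewrite !fib_morphnS E01 E10 !fib_morph_cat -!catA.
by exists (fib_morph z ++ [:: 0]); left; rewrite !fib_morphnS E01 E10 !fib_morph_cat -!catA.
Qed.

Lemma fib_block2_common m : exists z, size z = common_len m /\
  ((fib_block2 m 0 = z ++ [:: 0; 1] /\ fib_block2 m 1 = z ++ [:: 1; 0]) \/
   (fib_block2 m 0 = z ++ [:: 1; 0] /\ fib_block2 m 1 = z ++ [:: 0; 1])).
Proof.
have [z E] := fib_morphn_01_10 m; exists z; split; last exact: E.
have : size (fib_morphn m [:: 0; 1]) = len0 m + len1 m.
  by rewrite -cat1s fib_morphn_cat size_cat.
by rewrite /common_len; case: E => [[-> _]|[-> _]]; rewrite size_cat /= => <-; lia.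
Qed.

Lemma nth_fib_morphn0 m i : i.+1 < len1 m ->
  nth 0 (fib_morphn m [:: 0]) i = nth 0 (fib_morphn m [:: 1]) i.
Proof.
case: m => [//|m] lt_i; rewrite [in RHS]fib_morphnSr fib_morphnSr.
rewrite (_ : fib_morph _ = [:: 0] ++ [:: 1]) // fib_morphn_cat nth_cat.
by rewrite (_ : size _ = len1 m.+1) ?(ltnW lt_i) // len1S.
Qed.

(* f j f j.+1 is 01, 10 or 00, and sigma^m(00) agrees with sigma^m(01) up to
   its last letter. *)
Lemma fib_word_block2 m j t : t < len0 m + len1 m - 1 ->
  f (block_start m j + t) = nth 0 (fib_block2 m (f j)) t.
Proof.
move=> lt_t; have factor2 : factor f j 2 = [:: f j; f j.+1].
  by rewrite /factor /mkseq /= addn0 addn1.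
have len1_pos := len1_gt0 m; have le_len10 := len1_le_len0 m.
case: (fib_word_0or1 j) => f_j; last first.
  have f_j1 : f j.+1 = 0 by apply: fib_word_no11; rewrite f_j.
  rewrite (@fib_word_block_start m j 2) factor2 f_j f_j1 //= -cat1s fib_morphn_cat size_cat.
  by rewrite -/(len1 m) -/(len0 m); lia.
rewrite (@fib_word_block_start m j 2) factor2 f_j /fib_block2 /=; last first.
  rewrite -cat1s fib_morphn_cat size_cat -/(len0 m).
  by have := len1_le_size_fib_morphn1 m (f j.+1); lia.
rewrite -cat1s fib_morphn_cat (_ : [:: 0; 1] = [:: 0] ++ [:: 1]) // fib_morphn_cat !nth_cat.
case: ifP => // le_len0_t; case: (fib_word_0or1 j.+1) => -> //.
by rewrite nth_fib_morphn0 //; move/negbT: le_len0_t; rewrite -leqNgt -/(len0 m); lia.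
Qed.

Lemma fib_word_block_start_common m j t : t < common_len m -> f (block_start m j + t) = f t.
Proof.
move=> lt_t; have lt_t' : t < len0 m + len1 m - 1 by rewrite /common_len in lt_t; lia.
rewrite -[in RHS](add0n t) -(block_start0 m) !fib_word_block2 // (_ : f 0 = 0) //.
have [z [size_z [[E0 E1]|[E0 E1]]]] := fib_block2_common m;
  by case: (fib_word_0or1 j) => ->; rewrite E0 ?E1 !nth_cat size_z lt_t.
Qed.

Lemma common_lenS m : common_len m.+1 = common_len m + len0 m.
Proof. by rewrite /common_len len0S len1S; have := len1_gt0 m; have := len1_le_len0 m; lia. Qed.

Definition boundary_letter (m a : nat) : nat := nth 0 (fib_block2 m a) (common_len m).

Lemma fib_word_boundary m j : f (block_start m j + common_len m) = boundary_letter m (f j).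
Proof.
by rewrite fib_word_block2 // /common_len; have := len1_gt0 m; have := len1_le_len0 m; lia.
Qed.

Lemma boundary_letter_inj m a b : a < 2 -> b < 2 ->
  boundary_letter m a = boundary_letter m b -> a = b.
Proof.
have : boundary_letter m 0 != boundary_letter m 1.
  rewrite /boundary_letter; have [z [size_z [[-> ->]|[-> ->]]]] := fib_block2_common m;
    by rewrite !nth_cat size_z ltnn subnn.
by case: a b => [|[|]] [|[|]] // /eqP neq01 _ _ E; case: neq01.
Qed.

(** * Occurrences of a factor *)

Definition occurs_at (w : seq nat) (p : nat) : bool := factor f p (size w) == w.

Lemma occurs_at_rcons w c p :
  occurs_at (rcons w c) p = occurs_at w p && (f (p + size w) == c).
Proof. by rewrite /occurs_at /factor size_rcons mkseqS eqseq_rcons. Qed.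

Definition occurrence_shape (w : seq nat) (m p0 : nat) : Prop :=
  [/\ p0 < len1 m, p0 + size w <= common_len m &
      forall p, occurs_at w p <-> exists j, p = p0 + block_start m j].

Section OccurrenceShape.

Variables (w : seq nat) (m p0 : nat).
Hypothesis shape_w : occurrence_shape w m p0.

Lemma occurs_at_rcons_shape c p : occurs_at (rcons w c) p <->
  exists j, p = p0 + block_start m j /\ f (block_start m j + (p0 + size w)) = c.
Proof.
have [_ _ occP] := shape_w; rewrite occurs_at_rcons; split.
  by case/andP=> [/occP [j ->] /eqP <-]; exists j; rewrite addnA [p0 + _]addnC.
move=> [j [-> <-]]; apply/andP; split; first by apply/occP; exists j.
by rewrite addnA [p0 + _]addnC.
Qed.

Lemma occurs_at_rcons_none c :
  (forall j, f (block_start m j + (p0 + size w)) != c) -> forall p, ~~ occurs_at (rcons w c) p.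
Proof. by move=> neq_c p; apply/negP => /occurs_at_rcons_shape [j [_ /eqP]]; apply/negP. Qed.

Lemma occurrence_shape_rcons : p0 + size w < common_len m ->
  occurrence_shape (rcons w (f (p0 + size w))) m p0.
Proof.
have [lt_p0 _ _] := shape_w; move=> lt_w; split=> [||p]; rewrite ?size_rcons ?addnS //.
rewrite occurs_at_rcons_shape; split=> [[j [-> _]]|[j ->]]; first by exists j.
by exists j; rewrite fib_word_block_start_common.
Qed.

Hypothesis at_boundary : p0 + size w = common_len m.

Lemma fib_word_boundary_eq j a : a < 2 ->
  f (block_start m j + (p0 + size w)) = boundary_letter m a -> f j = a.
Proof.
by rewrite at_boundary fib_word_boundary; apply: boundary_letter_inj (fib_word_lt2 j).
Qed.

Lemma occurrence_shape_rcons_boundary0 :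
  occurrence_shape (rcons w (boundary_letter m 0)) m.+1 p0.
Proof.
have [lt_p0 _ _] := shape_w; have := len1_gt0 m; have := len1_le_len0 m.
split=> [||p]; rewrite ?size_rcons ?common_lenS ?len1S ?len0S -?at_boundary; try lia.
rewrite occurs_at_rcons_shape; split=> [[j [-> /fib_word_boundary_eq f_j0]]|[i ->]].
  by have [i ->] := (fib_word_eq0 j).1 (f_j0 erefl); exists i; rewrite block_start_comp addn1.
exists (block_start 1 i); split; first by rewrite block_start_comp addn1.
rewrite at_boundary fib_word_boundary (_ : f (block_start 1 i) = 0) //.
by apply/fib_word_eq0; exists i.
Qed.

Lemma occurrence_shape_rcons_boundary1 :
  occurrence_shape (rcons w (boundary_letter m 1)) m.+2 (p0 + len0 m).
Proof.
have [lt_p0 _ _] := shape_w; have := len1_gt0 m; have := len1_le_len0 m.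
split=> [||p]; rewrite ?size_rcons ?common_lenS ?len1S ?len0S -?at_boundary; try lia.
have block_start_succ i : block_start m (block_start 2 i).+1 = block_start m.+2 i + len0 m.
  by rewrite block_startS block_start_comp addn2 (fib_word_block_start2 i).1.
rewrite occurs_at_rcons_shape; split=> [[j [-> /fib_word_boundary_eq f_j1]]|[i ->]].
  have /fib_word_neq0_block_start2 [i ->] : f j <> 0 by rewrite f_j1.
  by exists i; rewrite block_start_succ; lia.
exists (block_start 2 i).+1; split; first by rewrite block_start_succ; lia.
by rewrite at_boundary fib_word_boundary (fib_word_block_start2 i).2.
Qed.

End OccurrenceShape.

Arguments occurs_at_rcons_none {w m p0}.

Lemma fib_word_occurrences w :
  (forall p, ~~ occurs_at w p) \/ exists m p0, occurrence_shape w m p0.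
Proof.
elim/last_ind: w => [|w c [none|[m [p0 shape_w]]]].
- right; exists 0, 0; split=> // p; split=> // _.
  by exists p; rewrite /block_start size_mkseq.
- by left=> p; rewrite occurs_at_rcons negb_and none.
have [_ le_w _] := shape_w.
have [lt_w|ge_w] := ltnP (p0 + size w) (common_len m).
  have [->|neq_c] := eqVneq c (f (p0 + size w)).
    by right; exists m, p0; apply: occurrence_shape_rcons.
  left; apply: (occurs_at_rcons_none shape_w) => j.
  by rewrite fib_word_block_start_common // eq_sym.
have at_boundary : p0 + size w = common_len m by apply/eqP; rewrite eqn_leq le_w.
have [->|neq0] := eqVneq c (boundary_letter m 0).
  by right; exists m.+1, p0; apply: occurrence_shape_rcons_boundary0.
have [->|neq1] := eqVneq c (boundary_letter m 1).
  by right; exists m.+2, (p0 + len0 m); apply: occurrence_shape_rcons_boundary1.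
left; apply: (occurs_at_rcons_none shape_w) => j.
by rewrite at_boundary fib_word_boundary; case: (fib_word_0or1 j) => ->; rewrite eq_sym.
Qed.

(** * Points of an increasing sequence in a window *)

Section CountingPoints.

Variables (y : nat -> nat) (P : pred nat).
Hypothesis y_incr : forall j, y j < y j.+1.
Hypothesis P_range : forall p, P p <-> exists j, p = y j.

Let y_mono : {mono y : i j / i <= j}.
Proof. exact/leq_mono/(homo_ltn ltn_trans y_incr). Qed.

Lemma ltn_count_points j b : (y j < b) = (j < count P (iota 0 b)).
Proof.
elim: b j => [|b IH] j; first by rewrite ltn0.
rewrite -[b.+1]addn1 iotaD count_cat add0n /= addn0 addn1 ltnS.
have [/P_range [t b_yt]|not_Pb] := boolP (P b).
  have -> : count P (iota 0 b) = t.
    by apply/eqP; rewrite eqn_leq leqNgt -IH b_yt ltnn -y_mono leqNgt -b_yt IH ltnn.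
  by rewrite addn1 ltnS b_yt y_mono.
rewrite addn0 leq_eqVlt IH; case: eqP => //= y_j_b.
by case/negP: not_Pb; apply/P_range; exists j.
Qed.

Lemma count_points_window a L :
  count P (iota a L) = count P (iota 0 (a + L)) - count P (iota 0 a).
Proof. by rewrite iotaD count_cat add0n addKn. Qed.

Lemma count_points_eq t b :
  (forall j, j < t -> y j < b) -> b <= y t -> count P (iota 0 b) = t.
Proof.
move=> below above; apply/eqP; rewrite eqn_leq leqNgt -ltn_count_points -leqNgt above.
by rewrite leqNgt; apply/negP => /below; rewrite ltn_count_points ltnn.
Qed.

Variables (L D k : nat).
Hypothesis y_balanced : forall s r t, t < L -> y (s + t) - y s <= y (r + t) - y r + D.
Hypothesis y_spread : forall j, y j + D <= (y (j + k)).+1.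

(* If [a, a + L) holds c points and [a', a' + L) at least c + k + 2, then
   c + k + 2 consecutive points span less than L, while the c points of
   [a, a + L) and their two neighbours (the left one exists as y 0 < a) span
   more than L. *)
Lemma count_window_le a a' :
  y 0 < a -> count P (iota a' L) <= count P (iota a L) + k.+1.
Proof.
move=> y0_lt_a; have := count_size P (iota a' L).
rewrite size_iota (count_points_window a') (count_points_window a).
set s := count P (iota 0 a); set e := count P (iota 0 (a + L)).
set r := count P (iota 0 a'); set e' := count P (iota 0 (a' + L)) => le_count_L.
have s_gt0 : 0 < s by rewrite -ltn_count_points.
have y_pred_s : y s.-1 < a by rewrite ltn_count_points prednK.
have y_e : a + L <= y e by rewrite leqNgt ltn_count_points ltnn.
have y_r : a' <= y r by rewrite leqNgt ltn_count_points ltnn.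
have le_s_e : s <= e by rewrite /s /e iotaD count_cat leq_addr.
rewrite leqNgt; apply/negP => gap; set c := e - s in gap.
have y_last : y (r + c.+1 + k) < a' + L by rewrite ltn_count_points; lia.
have y_r_le : y r <= y (r + c.+1) by rewrite y_mono leq_addr.
have := @y_balanced s.-1 r c.+1; rewrite (_ : s.-1 + c.+1 = e); last by lia.
have := y_spread (r + c.+1); lia.
Qed.

End CountingPoints.

(** * Balance *)

Lemma common_len_ge m : m <= common_len m.
Proof.
rewrite /common_len; suff : m + 2 <= len0 m + len1 m by lia.
by elim: m => // m IH; rewrite len0S len1S; have := len1_le_len0 m; lia.
Qed.

(* The prefix of f of length common_len m starts every block sigma^m(f j). *)
Lemma factor_recurs i n a0 : exists i', a0 <= i' /\ factor f i' n = factor f i n.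
Proof.
have le_a0 : a0 <= block_start (i + n) a0.
  by elim: a0 => // j IH; apply: leq_ltn_trans IH (block_start_lt _ j).
exists (block_start (i + n) a0 + i); split; first exact: leq_trans le_a0 (leq_addr _ _).
apply: (@eq_from_nth _ 0); rewrite !size_mkseq // => t lt_t.
rewrite !nth_mkseq // -addnA fib_word_block_start_common //.
by apply: leq_trans (common_len_ge _); rewrite ltn_add2l.
Qed.

Lemma occ_factor (x : nat -> nat) w i n : occ w (factor x i n) =
  count (fun p => factor x p (size w) == w) (iota i (n.+1 - size w)).
Proof.
rewrite /occ size_mkseq; set k := size w.
have occ_p p : p \in iota 0 n.+1 -> (take k (drop p (factor x i n)) == w) =
    (factor x (i + p) k == w) && (p < 0 + (n.+1 - k)).
  rewrite mem_iota /factor /mkseq => /andP [_ lt_p].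
  rewrite -map_drop -map_take drop_iota take_iota add0n.
  have [le_k|lt_k] := leqP k (n - p); rewrite add0n.
    rewrite (_ : p < n.+1 - k) ?andbT; last by lia.
    by rewrite -{1}(addn0 p) iotaDl -map_comp; congr (_ == w); apply: eq_map => t /=; rewrite addnA.
  rewrite (_ : p < n.+1 - k = false) ?andbF; last by lia.
  by apply/negbTE/eqP => /(congr1 size); rewrite size_map size_iota -/k; lia.
rewrite (eq_in_count occ_p) -count_filter filter_iota_ltn; last by lia.
by rewrite -[in RHS](addn0 i) iotaDl count_map.
Qed.

Lemma zeros_count i L : zeros i L = count (fun p => f p == 0) (iota i L).
Proof. by rewrite /zeros /factor /mkseq -[in RHS](addn0 i) iotaDl !count_map. Qed.

Lemma zeros_balanced L i i' : zeros i' L <= zeros i L + 1.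
Proof.
elim/ltn_ind: L i i' => L IH i i'.
have [j [j_gt0 E]] := factor_recurs i L 1; rewrite /zeros -E -!/(zeros _ _) !zeros_count.
apply: (@count_window_le (block_start 1) _ (block_start_lt 1) _ L 1 0) => [p|s r t lt_t|s|].
- by split=> [/eqP/fib_word_eq0 //|/fib_word_eq0/eqP].
- rewrite !block_startD (_ : len0 1 = 2) // (_ : len1 1 = 1) //.
  by have := IH t lt_t r s; lia.
- by rewrite addn0 addn1.
- by rewrite block_start0.
Qed.

Lemma occ_factor_le w i j n : occ w (factor f j n) <= occ w (factor f i n) + 2.
Proof.
have [none|[m [p0 [lt_p0 _ occP]]]] := fib_word_occurrences w.
  by rewrite occ_factor (eq_count (a2 := pred0)) ?count_pred0 // => p; apply/negbTE/none.
have [i' [lt_p0_i' E]] := factor_recurs i n p0.+1; rewrite -E !occ_factor.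
have le_len10 := len1_le_len0 m; have le_len0_2len1 := len0_le_double_len1 m.
apply: (@count_window_le (fun j => p0 + block_start m j) (occurs_at w) _ occP _
  (len0 m - len1 m) 1).
- by move=> j'; rewrite ltn_add2l block_start_lt.
- by move=> s r t _; rewrite !block_startD; have := zeros_balanced t r s; nia.
- by move=> j'; rewrite addn1 block_startS; have := len1_le_size_fib_morphn1 m (f j'); lia.
- by rewrite block_start0 addn0.
Qed.

Lemma fib_word_balanced2 k : balanced f k 2.
Proof.
by move=> i j n w _ _; have := occ_factor_le w i j n; have := occ_factor_le w j i n; lia.
Qed.

Lemma len1_add2_le_len0 m : 3 <= m -> len1 m + 2 <= len0 m.
Proof.
case: m => [|[|[|m]]] // _; rewrite len0S len1S leq_add2l len1S len0S.
by have := len1_gt0 m; have := len1_le_len0 m; lia.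
Qed.

Lemma leq_block_start m : {mono block_start m : i j / i <= j}.
Proof. exact/leq_mono/(homo_ltn ltn_trans (block_start_lt m)). Qed.

Lemma factor2_shape_ge3 k m p0 : 1 < k -> occurrence_shape (factor f 2 k) m p0 -> 3 <= m.
Proof.
move=> k_gt1 [lt_p0 _ occP]; rewrite leqNgt; apply/negP => m_lt3.
have len1_le2 : len1 m <= 2 by move: m_lt3; clear occP lt_p0; case: m => [|[|[|]]].
have p0_lt2 : p0 < 2 := leq_trans lt_p0 len1_le2.
have /eqP : occurs_at (factor f 2 k) p0 by apply/occP; exists 0; rewrite block_start0 addn0.
rewrite size_mkseq => /(congr1 (nth 0 ^~ (1 - p0))); rewrite !nth_mkseq; try lia.
by case: p0 p0_lt2 {lt_p0 occP} => [|[|]].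
Qed.

(* For m >= 3 the gaps len0 m, len1 m, len0 m, len0 m between the first five
   occurrences put three of them in a window of length len0 m + len1 m + 1
   and only one in the next window. *)
Lemma occ_gap2 w m p0 : 3 <= m -> occurrence_shape w m p0 ->
  exists i j n, occ w (factor f i n) = (occ w (factor f j n)).+2.
Proof.
move=> m_ge3 [_ _ occP]; set A := len0 m; set B := len1 m.
have [le_B2_A B_gt0] := (len1_add2_le_len0 _ m_ge3, len1_gt0 m).
have [f0 f1 f2] : [/\ f 0 = 0, f 1 = 1 & f 2 = 0] by [].
have block_start_S j : block_start m j.+1 = block_start m j + (if f j == 0 then A else B).
  by rewrite block_startS size_fib_morphn1.
have [block_start2 block_start3 block_start4] : [/\ block_start m 2 = A + B,
    block_start m 3 = 2 * A + B & block_start m 4 = 3 * A + B].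
  by rewrite !block_start_S block_start0 f0 f1 f2 (_ : f 3 = 0) //; split=> //=; lia.
have y_incr j : p0 + block_start m j < p0 + block_start m j.+1.
  by rewrite ltn_add2l block_start_lt.
have count_below t b : (forall j, j < t -> p0 + block_start m j < b) ->
    b <= p0 + block_start m t -> count (occurs_at w) (iota 0 b) = t.
  exact: (@count_points_eq _ _ y_incr occP).
have below t j : j < t.+1 -> p0 + block_start m j <= p0 + block_start m t.
  by rewrite ltnS leq_add2l leq_block_start.
set L := A + B + 1; exists p0, (p0 + L), (L + size w - 1).
rewrite !occ_factor -/(occurs_at w) (_ : (L + size w - 1).+1 - size w = L); last by lia.
rewrite (count_points_window _ p0) (count_points_window _ (p0 + L)) -addnA.
rewrite (count_below 0 p0) ?block_start0 ?addn0 // (count_below 3 (p0 + L)); first last.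
- by rewrite block_start3 /L; lia.
- by move=> j /(below 2); rewrite block_start2 /L; lia.
rewrite (count_below 4 (p0 + (L + L))) //.
- by move=> j /(below 3); rewrite block_start3 /L; lia.
by rewrite block_start4 /L; lia.
Qed.

Lemma fib_word_occ_gap2 k : 1 < k ->
  exists i j n, occ (factor f 2 k) (factor f i n) = (occ (factor f 2 k) (factor f j n)).+2.
Proof.
move=> k_gt1; have [/(_ 2)|[m [p0 shape]]] := fib_word_occurrences (factor f 2 k).
  by rewrite /occurs_at size_mkseq eqxx.
exact: occ_gap2 (factor2_shape_ge3 _ _ _ k_gt1 shape) shape.
Qed.

Theorem theorem14 : forall k : nat, (2 <= k)%N ->
  balanced fib_word k 2 /\
  (forall C : nat, (1 <= C)%N -> balanced fib_word k C -> (2 <= C)%N).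
Proof.
move=> k k_ge2; split=> [|C _ balanced_C]; first exact: fib_word_balanced2.
have [i [j [n gap]]] := fib_word_occ_gap2 _ k_ge2.
have := balanced_C i j n (factor f 2 k) (size_mkseq _ _).
have -> : all (fun a => a < 2) (factor f 2 k).
  by apply/allP => _ /mapP [t _ ->]; exact: fib_word_lt2.
by rewrite gap => /(_ isT); lia.
Qed.
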